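(* Let $G=(V,E)$ be a finite simple graph and let $x,y$ be easy construction sequences for $G$ whose restrictions to $V$ coincide (the vertices appear in the same order in $x$ and in $y$). Then $\nu(x)=\nu(y)$.
   Context: For a finite simple graph $G=(V,E)$ with $\ell=|V|+|E|$, a construction sequence (c-sequence) is a bijection $x:\{1,\dots,\ell\}\to V\sqcup E$ such that every edge $e=uw$ satisfies $x^{-1}(e)>\max\{x^{-1}(u),x^{-1}(w)\}$. The cost of $x$ is $\nu(x)=\sum_{e=uw\in E}\big(2x^{-1}(e)-x^{-1}(u)-x^{-1}(w)\big)$. A c-sequence is easy if no edge precedes a vertex. *)

From mathcomp Require Import all_boot all_algebra.
Import GRing.Theory.
Set Implicit Arguments. Unset Strict Implicit. Unset Printing Implicit Defensive.

Definition simple_graph (V : finType) (adj : rel V) : Prop :=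
  irreflexive adj /\ symmetric adj.

Definition is_edge (V : finType) (adj : rel V) (S : {set V}) : bool :=
  [exists u, exists w, adj u w && (S == [set u; w])].

Definition edge (V : finType) (adj : rel V) := {S : {set V} | is_edge adj S}.

Definition item (V : finType) (adj : rel V) := (V + edge adj)%type.

(* A sequence x : {1..l} -> V ⊔ E is represented as the list
   [x(1); ...; x(l)]; it is a bijection iff it is a duplicate-free
   enumeration of all items. x^{-1}(a) = index a s + 1. *)
Definition pos (V : finType) (adj : rel V) (s : seq (item adj)) (a : item adj) : nat :=
  (index a s).+1.

Definition is_bijective_seq (V : finType) (adj : rel V) (s : seq (item adj)) : bool :=
  uniq s && (size s == #|{: item adj}|).

Definition c_sequence (V : finType) (adj : rel V) (s : seq (item adj)) : Prop :=
  is_bijective_seq s /\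
  forall (f : edge adj) (u : V), u \in val f -> pos s (inl u) < pos s (inr f).

Definition cost (V : finType) (adj : rel V) (s : seq (item adj)) : int :=
  (\sum_(f : edge adj)
     ((2 * pos s (inr f))%:Z - \sum_(u in val f) (pos s (inl u))%:Z))%R.

Definition easy (V : finType) (adj : rel V) (s : seq (item adj)) : Prop :=
  forall (f : edge adj) (u : V), pos s (inl u) < pos s (inr f).

Definition vertex_order (V : finType) (adj : rel V) (s : seq (item adj)) : seq V :=
  pmap (fun a => match a with inl v => Some v | inr _ => None end) s.

From mathcomp Require Import all_boot all_algebra.

Set Implicit Arguments.
Unset Strict Implicit.
Unset Printing Implicit Defensive.

Import GRing.Theory.

(* In an easy sequence the vertices occupy the first |V| positions, in the
   order of the restriction to V; so two easy sequences with the same vertex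
   order put every vertex at the same position.  The edges then fill the
   remaining positions, whatever their order, so the sum of the edge
   positions agrees as well.  The cost is twice that sum minus a sum of
   vertex positions. *)

Definition oleft (A B : Type) (a : A + B) : option A :=
  if a is inl v then Some v else None.

Lemma index_inl_pmap (A B : eqType) (s : seq (A + B)) (v : A) :
  (forall w, index (inl v) s < index (inr w) s) ->
  index (inl v) s = index v (pmap (@oleft A B) s).
Proof.
elim: s => [|[u|w] s IHs] //= inl_first; last first.
  by have := inl_first w; rewrite eqxx.
have [->|neq_uv] := eqVneq u v; first by rewrite eqxx.
have neq_inl : (inl u == inl v :> A + B) = false.
  by apply/negbTE; apply: contra neq_uv => /eqP [->].
rewrite neq_inl IHs // => w.
by have := inl_first w; rewrite neq_inl.
Qed.

Lemma sum_index_uniq (T : eqType) (s : seq T) :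
  uniq s -> \sum_(a <- s) index a s = \sum_(0 <= i < size s) i.
Proof.
case: s => [|a0 s] s_uniq; first by rewrite big_nil big_geq.
rewrite (big_nth a0); apply: eq_big_nat => i /andP[_ lt_i_s].
exact: index_uniq.
Qed.

Lemma sum_index_full (T : finType) (s : seq T) :
  uniq s -> size s = #|T| -> \sum_(a : T) index a s = \sum_(0 <= i < #|T|) i.
Proof.
move=> s_uniq s_size.
have [_ s_enum] : (size s = size (enum T)) * (s =i enum T).
  by apply: (uniq_min_size s_uniq) => [a|]; rewrite ?mem_enum // -cardE s_size.
have s_perm : perm_eq (enum T) s.
  by apply: uniq_perm (enum_uniq T) s_uniq _ => a; rewrite s_enum.
by rewrite -big_enum (perm_big _ s_perm) sum_index_uniq // s_size.
Qed.

Lemma sum_index_inr_eq (A B : finType) (s t : seq (A + B)) :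
  uniq s -> size s = #|{: A + B}| -> uniq t -> size t = #|{: A + B}| ->
  (forall v, index (inl v) s = index (inl v) t) ->
  \sum_(w : B) index (inr w) s = \sum_(w : B) index (inr w) t.
Proof.
move=> s_uniq s_size t_uniq t_size inl_eq.
have := sum_index_full s_uniq s_size.
rewrite -(sum_index_full t_uniq t_size) !big_sumType /=.
by rewrite (eq_bigr _ (fun v _ => inl_eq v)) => /addnI.
Qed.

Lemma cost_eq (V : finType) (adj : rel V) (x y : seq (item adj)) :
  (forall v, index (inl v) x = index (inl v) y) ->
  \sum_(f : edge adj) index (inr f) x = \sum_(f : edge adj) index (inr f) y ->
  cost x = cost y.
Proof.
move=> inl_eq inr_sum_eq; rewrite /cost !sumrB; congr (_ - _)%R; last first.
  by apply: eq_bigr => f _; apply: eq_bigr => u _; rewrite /pos inl_eq.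
rewrite -!(big_morph Posz PoszD (erefl (Posz 0))) -!big_distrr /pos.
under eq_bigr do rewrite -addn1.
under [in RHS]eq_bigr do rewrite -addn1.
by rewrite !big_split /= inr_sum_eq.
Qed.

Theorem lemma4 (V : finType) (adj : rel V) (x y : seq (item adj)) :
  simple_graph adj ->
  c_sequence x -> c_sequence y -> easy x -> easy y ->
  vertex_order x = vertex_order y ->
  cost x = cost y.
Proof.
move=> _ [/andP[x_uniq /eqP x_size] _] [/andP[y_uniq /eqP y_size] _].
move=> x_easy y_easy same_order.
have inl_eq v : index (inl v) x = index (inl v) y.
  rewrite (index_inl_pmap (fun f => x_easy f v)).
  by rewrite (index_inl_pmap (fun f => y_easy f v)) -[pmap _ y]same_order.
apply: (cost_eq inl_eq).
exact: sum_index_inr_eq x_uniq x_size y_uniq y_size inl_eq.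
Qed.
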